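(* Let $\pi^{\mathrm{cen},*}\in S^{\mathrm{cen}}$. (a) For any $\varepsilon\ge0$, any optimizer $(\pi^*_1,\dots,\pi^*_N,\pi^*_c)$ of the CAL problem with parameter $\varepsilon$, and any $i$, $V_{N^{-1}\mathbf{1}}(\pi^{\mathrm{cen},*})\le V_{N^{-1}\mathbf{1}}(\pi^*_i)$. (b) For any $j\in\{1,\dots,N\}$ and $\pi^{\mathrm{dec},*}_j\in S^{\mathrm{dec}}_j$, if $V_{N^{-1}\mathbf{1}}(\pi^{\mathrm{cen},*})<V_{N^{-1}\mathbf{1}}(\pi^{\mathrm{dec},*}_j)$, then there exists $\varepsilon>0$ such that $V_{N^{-1}\mathbf{1}}(\pi^*_j)\le V_{N^{-1}\mathbf{1}}(\pi^{\mathrm{dec},*}_j)$ for every optimizer $(\pi^*_1,\dots,\pi^*_N,\pi^*_c)$ of the CAL problem with parameter $\varepsilon$.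
   Context: Let $\mathcal{S},\mathcal{A}$ be finite sets, $\gamma\in(0,1)$, $\rho$ a probability distribution on $\mathcal{S}$, and for $i=1,\dots,N$ environment $i$ is the Markov decision process $(\mathcal{S},\mathcal{A},P^i,\gamma,\rho)$. $\Pi$ is the set of stationary policies $\pi:\mathcal{S}\to\Delta(\mathcal{A})$ ($\pi(s,a)$ = probability of $a$ at $s$). $\mu^\pi_i(s,a)=\sum_{t\ge0}\gamma^t\mathbb{P}^{\pi,i}_\rho[s_t=s,a_t=a]$ is the discounted occupation measure (trajectory law: $s_0\sim\rho$, $a_t\sim\pi(s_t,\cdot)$, $s_{t+1}\sim P^i(\cdot\mid s_t,a_t)$). Expert policies $\pi^{E_i}\in\Pi$ and a cost basis matrix $\Phi\in\mathbb{R}^{|\mathcal{S}||\mathcal{A}|\times n_c}$ with columns of sup-norm at most $1$ are given. For $\beta$ in the probability simplex of $\mathbb{R}^N$, $V_\beta(\pi)=\sum_{i=1}^N\beta_i\|\Phi^\top\mu^\pi_i-\Phi^\top\mu^{\pi^{E_i}}_i\|_1$; $N^{-1}\mathbf{1}$ is the vector with all entries $1/N$. $S^{\mathrm{dec}}_j=\arg\min_{\pi\in\Pi}\|\Phi^\top\mu^\pi_j-\Phi^\top\mu^{\pi^{E_j}}_j\|_1$ and $S^{\mathrm{cen}}=\arg\min_{\pi\in\Pi}\sum_{i=1}^N\|\Phi^\top\mu^\pi_i-\Phi^\top\mu^{\pi^{E_i}}_i\|_1$. The CAL problem with parameter $\varepsilon\ge0$ is: minimize $\sum_{i=1}^N\|\Phi^\top\mu^{\pi_i}_i-\Phi^\top\mu^{\pi^{E_i}}_i\|_1$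 over $(\pi_1,\dots,\pi_N,\pi_c)\in\Pi^{N+1}$ subject to $\max_{(s,a)}|\pi_i(s,a)-\pi_c(s,a)|\le\varepsilon$ for all $i$. *)

From HB Require Import structures.
From mathcomp Require Import all_boot all_order all_algebra.
From mathcomp Require Import all_classical all_reals all_analysis.
Set Implicit Arguments. Unset Strict Implicit. Unset Printing Implicit Defensive.
Import Order.TTheory GRing.Theory Num.Theory.
Local Open Scope ring_scope.

Section CAL.
Variables (R : realType) (S A : finType).

Definition is_policy (pi : S -> A -> R) : Prop :=
  (forall s a, 0 <= pi s a) /\ (forall s, \sum_(a : A) pi s a = 1).

Definition is_distr (rho : S -> R) : Prop :=
  (forall s, 0 <= rho s) /\ \sum_(s : S) rho s = 1.

(* transition kernel: P s a s' = P(s' | s, a) *)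
Definition is_kernel (P : S -> A -> S -> R) : Prop :=
  forall s a, is_distr (P s a).

(* law of s_t under s_0 ~ rho, a_t ~ pi(s_t,.), s_{t+1} ~ P(.|s_t,a_t) *)
Fixpoint state_law (P : S -> A -> S -> R) (rho : S -> R) (pi : S -> A -> R)
    (t : nat) : S -> R :=
  match t with
  | 0 => rho
  | t'.+1 => fun s' => \sum_(s : S) \sum_(a : A)
              state_law P rho pi t' s * pi s a * P s a s'
  end.

Definition sa_law P rho pi t (s : S) (a : A) : R := state_law P rho pi t s * pi s a.

Definition occupation (gamma : R) P rho pi (s : S) (a : A) : R :=
  limn (fun n => \sum_(0 <= t < n) gamma ^+ t * sa_law P rho pi t s a).

(* || Phi^T mu - Phi^T mu' ||_1, Phi : (S*A) x nc matrix given entrywise *)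
Definition feat_dist (nc : nat) (Phi : S * A -> 'I_nc -> R)
    (mu mu' : S -> A -> R) : R :=
  \sum_(k < nc) `| \sum_(sa : S * A) Phi sa k * mu sa.1 sa.2
                  - \sum_(sa : S * A) Phi sa k * mu' sa.1 sa.2 |.

Definition env_loss (N nc : nat) (gamma : R) (P : 'I_N -> S -> A -> S -> R)
    (rho : S -> R) (Phi : S * A -> 'I_nc -> R) (piE : 'I_N -> S -> A -> R)
    (i : 'I_N) (pi : S -> A -> R) : R :=
  feat_dist Phi (occupation gamma (P i) rho pi) (occupation gamma (P i) rho (piE i)).

Definition Vbeta (N nc : nat) gamma P rho Phi piE (beta : 'I_N -> R)
    (pi : S -> A -> R) : R :=
  \sum_(i < N) beta i * @env_loss N nc gamma P rho Phi piE i pi.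

Definition unif (N : nat) : 'I_N -> R := fun _ => (N%:R)^-1.

Definition S_dec (N nc : nat) gamma P rho Phi piE (j : 'I_N) (pi : S -> A -> R) : Prop :=
  is_policy pi /\ forall pi', is_policy pi' ->
    @env_loss N nc gamma P rho Phi piE j pi <= env_loss gamma P rho Phi piE j pi'.

Definition S_cen (N nc : nat) gamma P rho Phi piE (pi : S -> A -> R) : Prop :=
  is_policy pi /\ forall pi', is_policy pi' ->
    \sum_(i < N) @env_loss N nc gamma P rho Phi piE i pi
    <= \sum_(i < N) env_loss gamma P rho Phi piE i pi'.

Definition CAL_feasible (N : nat) (eps : R) (pis : 'I_N -> S -> A -> R)
    (pic : S -> A -> R) : Prop :=
  (forall i, is_policy (pis i)) /\ is_policy pic /\
  forall i s a, `| pis i s a - pic s a | <= eps.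

Definition CAL_objective (N nc : nat) gamma P rho Phi piE
    (pis : 'I_N -> S -> A -> R) : R :=
  \sum_(i < N) @env_loss N nc gamma P rho Phi piE i (pis i).

Definition CAL_optimizer (N nc : nat) gamma P rho Phi piE (eps : R)
    (pis : 'I_N -> S -> A -> R) (pic : S -> A -> R) : Prop :=
  CAL_feasible eps pis pic /\
  forall pis' pic', CAL_feasible eps pis' pic' ->
    @CAL_objective N nc gamma P rho Phi piE pis
    <= CAL_objective gamma P rho Phi piE pis'.

End CAL.

From HB Require Import structures.
From mathcomp Require Import all_boot all_order all_algebra.
From mathcomp Require Import all_classical all_reals all_analysis.
From mathcomp Require Import ring lra.
Import Order.TTheory GRing.Theory Num.Theory.
Local Open Scope ring_scope.
Set Implicit Arguments. Unset Strict Implicit.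

(* Part (a) holds because each local policy of a CAL optimizer is a policy, so
   the centralized policy does at least as well on the summed loss.
   For (b), every environment loss is Lipschitz in the policy for the sup-norm:
   perturbing the policy by d moves the law of s_t by at most t |A| d in l1,
   hence the occupation measure by |A| d / (1 - gamma)^2 and the loss by K d,
   with K = n_c |A| / (1 - gamma)^2.  The local policies of a CAL optimizer are
   pairwise within 2 eps, and its objective is at most the centralized optimum
   (the point (pi_cen, ..., pi_cen) is feasible), so
   V(pi*_j) <= V(pi_cen) + 2 eps K, which is at most V(pi_dec_j) for
   eps = (V(pi_dec_j) - V(pi_cen)) / (2 K + 1). *)

Lemma distr_le1 (R : realType) (T : finType) (p : T -> R) x :
  is_distr p -> p x <= 1.
Proof. by case=> p_ge0 <-; rewrite (bigD1 x) //= lerDl sumr_ge0. Qed.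

Lemma policy_distr (R : realType) (S A : finType) (pi : S -> A -> R) s :
  is_policy pi -> is_distr (pi s).
Proof. by case. Qed.

Lemma l1_dist_joint_le (R : realType) (S A : finType) (x x' : S -> R)
    (pi pi' : S -> A -> R) (d : R) :
  is_policy pi -> is_distr x' -> (forall s a, `|pi s a - pi' s a| <= d) ->
  \sum_s \sum_a `|x s * pi s a - x' s * pi' s a|
    <= \sum_s `|x s - x' s| + #|A|%:R * d.
Proof.
move=> [pi_ge0 pi_sum1] [x'_ge0 x'_sum1] close.
have row_le s : \sum_a `|x s * pi s a - x' s * pi' s a|
    <= `|x s - x' s| + x' s * (#|A|%:R * d).
  apply: (@le_trans _ _ (\sum_a (`|x s - x' s| * pi s a + x' s * d))).
    apply: ler_sum => a _.
    have -> : x s * pi s a - x' s * pi' s a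
        = (x s - x' s) * pi s a + x' s * (pi s a - pi' s a) by ring.
    apply: (le_trans (ler_normD _ _)).
    rewrite !normrM (ger0_norm (pi_ge0 s a)) (ger0_norm (x'_ge0 s)) lerD2l.
    exact: ler_wpM2l.
  by rewrite big_split /= -!mulr_sumr pi_sum1 mulr1 sumr_const mulr_natl.
apply: (le_trans (ler_sum _ (fun s _ => row_le s))).
by rewrite big_split /= -mulr_suml x'_sum1 mul1r.
Qed.

Lemma sum_expr_mul_succ_le (R : realFieldType) (g : R) n : 0 <= g < 1 ->
  \sum_(0 <= t < n) g ^+ t * t.+1%:R <= ((1 - g) ^+ 2)^-1.
Proof.
move=> /andP[g_ge0 g_lt1].
have closed_form m : (1 - g) ^+ 2 * \sum_(0 <= t < m) g ^+ t * t.+1%:R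
    = 1 - m.+1%:R * g ^+ m + m%:R * g ^+ m.+1.
  elim: m => [|m IH]; first by rewrite big_geq // mulr0 expr0 mul1r mul0r; ring.
  by rewrite big_nat_recr //= mulrDr IH -!nat1r !exprS; ring.
have sq_gt0 : 0 < (1 - g) ^+ 2 by rewrite exprn_gt0 // subr_gt0.
rewrite -(ler_pM2l sq_gt0) mulrV ?unitfE ?gt_eqF // closed_form.
have : n%:R * g ^+ n.+1 <= n.+1%:R * g ^+ n.
  have gX_le : g ^+ n.+1 <= g ^+ n by rewrite exprS ler_piMl ?exprn_ge0 // ltW.
  apply: (le_trans (ler_wpM2l _ gX_le)) => //.
  by rewrite ler_wpM2r ?exprn_ge0 ?ler_nat.
lra.
Qed.

Section StateLaw.
Variables (R : realType) (S A : finType) (P : S -> A -> S -> R) (rho : S -> R).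
Hypotheses (rho_distr : is_distr rho) (P_kernel : is_kernel P).

Lemma state_law_distr pi t : is_policy pi -> is_distr (state_law P rho pi t).
Proof.
move=> [pi_ge0 pi_sum1]; elim: t => [//|t [law_ge0 law_sum1]] /=; split.
  move=> s'; apply: sumr_ge0 => s _; apply: sumr_ge0 => a _.
  by have [P_ge0 _] := P_kernel s a; rewrite !mulr_ge0.
rewrite exchange_big /= -law_sum1; apply: eq_bigr => s _.
rewrite exchange_big /= -[RHS]mulr1 -(pi_sum1 s) mulr_sumr.
apply: eq_bigr => a _.
by have [_ P_sum1] := P_kernel s a; rewrite -mulr_sumr P_sum1 mulr1.
Qed.

Lemma sa_law_bound pi t s a : is_policy pi -> 0 <= sa_law P rho pi t s a <= 1.
Proof.
move=> pi_pol; have law_distr := state_law_distr t pi_pol.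
have pis_distr := policy_distr s pi_pol.
have [[law_ge0 _] [pi_ge0 _]] := (law_distr, pis_distr).
by rewrite mulr_ge0 ?mulr_ile1 ?(distr_le1 _ law_distr) ?(distr_le1 _ pis_distr).
Qed.

Lemma l1_dist_kernel_le (f : S -> A -> R) :
  \sum_s' `|\sum_s \sum_a f s a * P s a s'| <= \sum_s \sum_a `|f s a|.
Proof.
apply: (@le_trans _ _ (\sum_s' \sum_s \sum_a `|f s a| * P s a s')).
  apply: ler_sum => s' _; apply: (le_trans (ler_norm_sum _ _ _)).
  apply: ler_sum => s _; apply: (le_trans (ler_norm_sum _ _ _)).
  apply: ler_sum => a _; have [P_ge0 _] := P_kernel s a.
  by rewrite normrM (ger0_norm (P_ge0 s')).
rewrite exchange_big; apply: ler_sum => s _ /=.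
rewrite exchange_big; apply: ler_sum => a _ /=.
by have [_ P_sum1] := P_kernel s a; rewrite -mulr_sumr P_sum1 mulr1.
Qed.

Variables (pi pi' : S -> A -> R) (d : R).
Hypotheses (pi_pol : is_policy pi) (pi'_pol : is_policy pi').
Hypothesis close : forall s a, `|pi s a - pi' s a| <= d.

Lemma l1_dist_state_law_le t :
  \sum_s `|state_law P rho pi t s - state_law P rho pi' t s|
    <= t%:R * (#|A|%:R * d).
Proof.
elim: t => [|t IH].
  by rewrite mul0r big1 // => s _; rewrite subrr normr0.
have -> : \sum_s `|state_law P rho pi t.+1 s - state_law P rho pi' t.+1 s|
    = \sum_s' `|\sum_s \sum_a (state_law P rho pi t s * pi s a
        - state_law P rho pi' t s * pi' s a) * P s a s'|.
  apply: eq_bigr => s' _ /=; rewrite -sumrB; congr `|_|.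
  by apply: eq_bigr => s _; rewrite -sumrB; apply: eq_bigr => a _; rewrite mulrBl.
apply: (le_trans (l1_dist_kernel_le _)).
apply: (le_trans (l1_dist_joint_le _ pi_pol (state_law_distr t pi'_pol) close)).
by rewrite -nat1r mulrDl mul1r addrC lerD2l.
Qed.

Lemma l1_dist_sa_law_le t :
  \sum_(sa : S * A) `|sa_law P rho pi t sa.1 sa.2 - sa_law P rho pi' t sa.1 sa.2|
    <= t.+1%:R * (#|A|%:R * d).
Proof.
rewrite -(pair_bigA _ (fun s a => `|sa_law P rho pi t s a - sa_law P rho pi' t s a|)).
apply: (le_trans (l1_dist_joint_le _ pi_pol (state_law_distr t pi'_pol) close)).
by rewrite -nat1r mulrDl mul1r addrC lerD2l l1_dist_state_law_le.
Qed.

End StateLaw.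

Section Occupation.
Variables (R : realType) (S A : finType) (P : S -> A -> S -> R) (rho : S -> R).
Variable gamma : R.
Hypotheses (rho_distr : is_distr rho) (P_kernel : is_kernel P).
Hypothesis gamma01 : 0 < gamma < 1.

Lemma occupation_series_cvg pi s a : is_policy pi ->
  cvgn (fun n => \sum_(0 <= t < n) gamma ^+ t * sa_law P rho pi t s a).
Proof.
move=> pi_pol; have /andP[gamma_gt0 gamma_lt1] := gamma01.
have gammaX_ge0 t : 0 <= gamma ^+ t by rewrite exprn_ge0 // ltW.
apply: nondecreasing_is_cvgn.
  apply/nondecreasing_seqP => n; rewrite big_nat_recr //= lerDl mulr_ge0 //.
  by have /andP[] := sa_law_bound rho_distr P_kernel n s a pi_pol.
exists ((1 - gamma) ^+ 2)^-1 => _ [n _ <-].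
apply: le_trans (sum_expr_mul_succ_le n _); last by rewrite ltW.
apply: ler_sum => t _; apply: ler_wpM2l => //.
have /andP[_ law_le1] := sa_law_bound rho_distr P_kernel t s a pi_pol.
by apply: (le_trans law_le1); rewrite ler1n.
Qed.

Lemma l1_dist_occupation_le pi pi' (d : R) : 0 <= d ->
  is_policy pi -> is_policy pi' -> (forall s a, `|pi s a - pi' s a| <= d) ->
  \sum_(sa : S * A) `|occupation gamma P rho pi sa.1 sa.2
                     - occupation gamma P rho pi' sa.1 sa.2|
    <= #|A|%:R * d / (1 - gamma) ^+ 2.
Proof.
move=> d_ge0 pi_pol pi'_pol close; have /andP[gamma_gt0 gamma_lt1] := gamma01.
have gammaX_ge0 t : 0 <= gamma ^+ t by rewrite exprn_ge0 // ltW.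
pose partial p s a n := \sum_(0 <= t < n) gamma ^+ t * sa_law P rho p t s a.
have partial_cvg : ((fun n => \sum_(sa : S * A)
      `|partial pi sa.1 sa.2 n - partial pi' sa.1 sa.2 n|) @ \oo
    --> \sum_(sa : S * A) `|occupation gamma P rho pi sa.1 sa.2
                           - occupation gamma P rho pi' sa.1 sa.2|)%classic.
  apply: (cvg_big add_continuous) => // sa _.
  by apply: cvg_norm; apply: cvgB; exact: occupation_series_cvg.
apply: (cvgr_to_le partial_cvg); apply: nearW => n.
apply: (@le_trans _ _ (\sum_(0 <= t < n) gamma ^+ t * \sum_(sa : S * A)
    `|sa_law P rho pi t sa.1 sa.2 - sa_law P rho pi' t sa.1 sa.2|)).
  rewrite [leRHS](eq_bigr _ (fun t _ => mulr_sumr _ _ _ _)) exchange_big /=.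
  apply: ler_sum => sa _; rewrite -sumrB; apply: (le_trans (ler_norm_sum _ _ _)).
  by apply: ler_sum => t _; rewrite -mulrBr normrM ger0_norm.
apply: (@le_trans _ _ (\sum_(0 <= t < n) gamma ^+ t * t.+1%:R * (#|A|%:R * d))).
  apply: ler_sum => t _; rewrite -mulrA ler_wpM2l //.
  exact: l1_dist_sa_law_le.
rewrite -mulr_suml mulrC ler_wpM2l ?mulr_ge0 //.
by apply: sum_expr_mul_succ_le; rewrite ltW.
Qed.

End Occupation.

Lemma feat_distB_le (R : realType) (S A : finType) nc
    (Phi : S * A -> 'I_nc -> R) (mu mu' m : S -> A -> R) :
  (forall sa k, `|Phi sa k| <= 1) ->
  feat_dist Phi mu m - feat_dist Phi mu' m
    <= nc%:R * \sum_(sa : S * A) `|mu sa.1 sa.2 - mu' sa.1 sa.2|.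
Proof.
move=> Phi_le1; rewrite /feat_dist -sumrB.
apply: (@le_trans _ _ (\sum_(k < nc) \sum_(sa : S * A)
    `|mu sa.1 sa.2 - mu' sa.1 sa.2|)); last by rewrite sumr_const card_ord mulr_natl.
apply: ler_sum => k _; apply: (le_trans (lerB_dist _ _)).
rewrite opprB addrA subrK -sumrB; apply: (le_trans (ler_norm_sum _ _ _)).
apply: ler_sum => sa _; rewrite -mulrBr normrM.
by rewrite -[X in _ <= X]mul1r ler_wpM2r.
Qed.

Definition loss_lipschitz_const (R : realFieldType) (A : finType) (nc : nat)
    (gamma : R) : R :=
  nc%:R * #|A|%:R / (1 - gamma) ^+ 2.

Section CAL.
Variables (R : realType) (S A : finType) (N nc : nat) (gamma : R).
Variables (P : 'I_N -> S -> A -> S -> R) (rho : S -> R).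
Variables (piE : 'I_N -> S -> A -> R) (Phi : S * A -> 'I_nc -> R).
Hypotheses (gamma01 : 0 < gamma < 1) (rho_distr : is_distr rho).
Hypotheses (P_kernel : forall i, is_kernel (P i)).
Hypothesis Phi_le1 : forall sa k, `|Phi sa k| <= 1.

Local Notation L := (env_loss gamma P rho Phi piE).
Local Notation K := (loss_lipschitz_const A nc gamma).

Lemma loss_lipschitz_const_ge0 : 0 <= K.
Proof.
have /andP[_ gamma_lt1] := gamma01.
by rewrite mulr_ge0 ?mulr_ge0 // invr_ge0 exprn_ge0 // subr_ge0 ltW.
Qed.

Lemma env_loss_lipschitz i pi pi' (d : R) : 0 <= d ->
  is_policy pi -> is_policy pi' -> (forall s a, `|pi s a - pi' s a| <= d) ->
  L i pi <= L i pi' + K * d.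
Proof.
move=> d_ge0 pi_pol pi'_pol close; rewrite addrC -lerBlDr.
apply: (le_trans (feat_distB_le _ _ _ Phi_le1)).
have occ_le := l1_dist_occupation_le rho_distr (P_kernel i) gamma01 d_ge0
  pi_pol pi'_pol close.
apply: (le_trans (ler_wpM2l _ occ_le)) => //.
rewrite /loss_lipschitz_const.
by rewrite [leRHS](_ : _ = nc%:R * (#|A|%:R * d / (1 - gamma) ^+ 2)) //; ring.
Qed.

Lemma Vbeta_unif pi :
  Vbeta gamma P rho Phi piE (@unif R N) pi = N%:R^-1 * \sum_i L i pi.
Proof. by rewrite /Vbeta /unif mulr_sumr. Qed.

Lemma CAL_feasible_close (eps : R) (pis : 'I_N -> S -> A -> R) pic i j s a :
  CAL_feasible eps pis pic -> `|pis j s a - pis i s a| <= 2 * eps.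
Proof.
move=> [_ [_ close]]; have := close j s a; have := close i s a.
have -> : pis j s a - pis i s a = (pis j s a - pic s a) - (pis i s a - pic s a)
  by ring.
move: (ler_normB (pis j s a - pic s a) (pis i s a - pic s a)); lra.
Qed.

Lemma CAL_objective_le_policy (eps : R) pis pic pi : 0 <= eps ->
  CAL_optimizer gamma P rho Phi piE eps pis pic -> is_policy pi ->
  \sum_i L i (pis i) <= \sum_i L i pi.
Proof.
move=> eps_ge0 [_ opt] pi_pol; apply: (opt (fun=> pi) pi).
by split=> //; split=> // i s a; rewrite subrr normr0.
Qed.

Lemma CAL_optimizer_Vbeta_le (eps : R) pis pic pi j : (0 < N)%N -> 0 <= eps ->
  CAL_optimizer gamma P rho Phi piE eps pis pic -> is_policy pi ->
  Vbeta gamma P rho Phi piE (@unif R N) (pis j)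
    <= Vbeta gamma P rho Phi piE (@unif R N) pi + K * (2 * eps).
Proof.
move=> N_gt0 eps_ge0 opt pi_pol; have [feas _] := opt; have [pis_pol _] := feas.
have local_le i : L i (pis j) <= L i (pis i) + K * (2 * eps).
  apply: env_loss_lipschitz => //; first by rewrite mulr_ge0.
  by move=> s a; apply: CAL_feasible_close feas.
have sum_le : \sum_i L i (pis j) <= \sum_i L i pi + N%:R * (K * (2 * eps)).
  apply: (le_trans (ler_sum _ (fun i _ => local_le i))).
  rewrite big_split /= sumr_const card_ord [X in _ <= _ + X]mulr_natl lerD2r.
  exact: CAL_objective_le_policy opt pi_pol.
have N_neq0 : N%:R != 0 :> R by rewrite pnatr_eq0 -lt0n.
rewrite !Vbeta_unif -[X in _ <= _ + X](mulKf N_neq0) -mulrDr.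
by rewrite ler_pM2l ?invr_gt0 ?ltr0n.
Qed.

End CAL.

Unset Implicit Arguments. Set Strict Implicit.

Theorem proposition3 (R : realType) (S A : finType) (N nc : nat) (gamma : R)
    (P : 'I_N -> S -> A -> S -> R) (rho : S -> R)
    (piE : 'I_N -> S -> A -> R) (Phi : S * A -> 'I_nc -> R)
    (pi_cen : S -> A -> R) :
  (0 < N)%N -> 0 < gamma < 1 ->
  is_distr rho -> (forall i, is_kernel (P i)) ->
  (forall i, is_policy (piE i)) ->
  (forall sa k, `| Phi sa k | <= 1) ->
  S_cen gamma P rho Phi piE pi_cen ->
  (* (a) *)
  (forall (eps : R) (pis : 'I_N -> S -> A -> R) (pic : S -> A -> R) (i : 'I_N),
      0 <= eps -> CAL_optimizer gamma P rho Phi piE eps pis pic ->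
      Vbeta gamma P rho Phi piE (@unif R N) pi_cen
        <= Vbeta gamma P rho Phi piE (@unif R N) (pis i))
  /\
  (* (b) *)
  (forall (j : 'I_N) (pi_dec : S -> A -> R),
      S_dec gamma P rho Phi piE j pi_dec ->
      Vbeta gamma P rho Phi piE (@unif R N) pi_cen
        < Vbeta gamma P rho Phi piE (@unif R N) pi_dec ->
      exists eps : R, 0 < eps /\
        forall (pis : 'I_N -> S -> A -> R) (pic : S -> A -> R),
          CAL_optimizer gamma P rho Phi piE eps pis pic ->
          Vbeta gamma P rho Phi piE (@unif R N) (pis j)
            <= Vbeta gamma P rho Phi piE (@unif R N) pi_dec).
Proof.
move=> N_gt0 gamma01 rho_distr P_kernel _ Phi_le1 [cen_pol cen_opt]; split.
  move=> eps pis pic i _ [[pis_pol _] _].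
  by rewrite !Vbeta_unif ler_pM2l ?invr_gt0 ?ltr0n ?cen_opt.
move=> j pi_dec _.
set Vcen := Vbeta _ _ _ _ _ _ pi_cen; set Vdec := Vbeta _ _ _ _ _ _ pi_dec.
move=> lt_cen_dec.
have K_ge0 := loss_lipschitz_const_ge0 A nc gamma01.
set K := loss_lipschitz_const A nc gamma in K_ge0 *.
have den_gt0 : 0 < 2 * K + 1 by lra.
pose eps := (Vdec - Vcen) / (2 * K + 1).
have eps_gt0 : 0 < eps by rewrite divr_gt0 ?subr_gt0.
have err_le : K * (2 * eps) <= Vdec - Vcen.
  have -> : K * (2 * eps) = (Vdec - Vcen) * (2 * K / (2 * K + 1)).
    by rewrite /eps; field; rewrite gt_eqF.
  by rewrite ler_piMr ?subr_ge0 ?ltW // ltr_pdivrMr // mul1r ltrDl.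
exists eps; split=> // pis pic opt.
apply: le_trans (CAL_optimizer_Vbeta_le gamma01 rho_distr P_kernel Phi_le1 j
  N_gt0 (ltW eps_gt0) opt cen_pol) _.
by rewrite -/Vcen -lerBrDl.
Qed.
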